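(* Let $n = n(j) = m_1 + m_2 + \cdots + m_j$ with $1 \leq j \leq j_{\max}$. In the Hermitian case described below, the structure-preserving Padé-type model with data matrices $\mathcal A_n = \mathcal V_n^H \mathcal A\, \mathcal V_n$, $\mathcal E_n = \mathcal V_n^H \mathcal E\, \mathcal V_n$, $\mathcal B_n = \mathcal V_n^H \mathcal B$, $\mathcal L_n = \mathcal L\, \mathcal V_n$, $\mathcal D_n = \mathcal D$ satisfies \[ H_n(s) = H(s) + {\mathcal O}\bigl((s-s_0)^{2 j(n)} \bigr), \] where $H_n(s) = \mathcal D_n + \mathcal L_n (s\mathcal E_n - \mathcal A_n)^{-1}\mathcal B_n$.
   Context: Consider a first-order system $\mathcal E\, \frac{d}{dt} z(t) - \mathcal A\, z(t) = \mathcal B\, u(t)$, $y(t) = \mathcal D\, u(t) + \mathcal L\, z(t)$, with regular pencil $s\mathcal E - \mathcal A$ and transfer function $H(s) = \mathcal D + \mathcal L (s\mathcal E - \mathcal A)^{-1}\mathcal B$, which is the equivalent first-order formulation of one of the following Hermitian systems. (a) A Hermitian special second-order system $P_1 \frac{d}{dt}x + P_0 x + P_{-1}\int_{t_0}^t x\,d\tau = B u$, $y = D u + L x$, with either $P_{-1} = F_1 G F_2^H$ or $P_{-1} = F_1 G^{-1} F_2^H$ ($G$ nonsingular), where Hermitian means $L = B^H$, $P_0 = P_0^H$, $P_1 = P_1^H$, $F_1 = F_2$, $G = G^H$. Here $P_0,P_1\in\mathbb{C}^{N\times N}$, $G\in\mathbb{C}^{N_0\times N_0}$, and the first-order data are $\mathcal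 B = \begin{bmatrix} B\\ 0\end{bmatrix}$, $\mathcal L = \begin{bmatrix} L & 0\end{bmatrix}$, $\mathcal D = D$, and either $\mathcal A = \begin{bmatrix} -P_0 & -F_1 G\\ (F_2G)^H & 0\end{bmatrix}$, $\mathcal E = \begin{bmatrix} P_1 & 0\\ 0 & G^H\end{bmatrix}$ (first case) or $\mathcal A = \begin{bmatrix} -P_0 & -F_1\\ F_2^H & 0\end{bmatrix}$, $\mathcal E = \begin{bmatrix} P_1 & 0\\ 0 & G\end{bmatrix}$ (second case). (b) A Hermitian $l$-th order system $P_l x^{(l)} + \cdots + P_1 x' + P_0 x = B u$, $y = D u + L_{l-1}x^{(l-1)} + \cdots + L_0 x$, where Hermitian means $P_i = P_i^H$ ($0\le i\le l$), $L_0 = B^H$, $L_j = 0$ ($1\le j\le l-1$); the first-order data are the companion form with state $(x, x', \dots, x^{(l-1)})$: $\mathcal E = \mathrm{diag}(I,\dots,I,P_l)$, $\mathcal A = -\begin{bmatrix} 0 & -I & & \\ & \ddots & \ddots & \\ & & 0 & -I\\ P_0 & P_1 & \cdots & P_{l-1}\end{bmatrix}$, $\mathcal B = \begin{bmatrix}0\\ \vdots\\ 0\\ B\end{bmatrix}$, $\mathcal L = \begin{bmatrix} L_0 & L_1 & \cdots & L_{l-1}\end{bmatrix}$, $\mathcal D = D$. Let $s_0 \in \mathbb{R}$ with $s_0\mathcal E - \mathcal A$ nonsingular, and set $\mathcal M = (s_0\mathcal E - \mathcal A)^{-1}\mathcal E$, $\mathcal R = (s_0\mathcal E - \mathcal A)^{-1}\mathcal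 B$. Deflating the block-Krylov matrix $[\mathcal R,\ \mathcal M\mathcal R,\ \mathcal M^2\mathcal R,\dots]$ (deleting columns linearly dependent on earlier ones) gives $[\mathcal R^{(1)},\ \mathcal M\mathcal R^{(2)},\dots,\mathcal M^{j_{\max}-1}\mathcal R^{(j_{\max})}]$ where block $\mathcal R^{(j)}$ has $m_j$ columns; for $n = m_1+\cdots+m_j$, the block-Krylov subspace is $\mathcal K_n(\mathcal M,\mathcal R) = \mathrm{range}[\mathcal R^{(1)}, \mathcal M\mathcal R^{(2)}, \dots, \mathcal M^{j-1}\mathcal R^{(j)}]$. The projection matrix $\mathcal V_n$ is: in case (a), $\mathcal V_n = \begin{bmatrix} V_1 & 0\\ 0 & V_2\end{bmatrix}$, where $\begin{bmatrix} V_1\\ V_2\end{bmatrix}$ ($V_1$ with $N$ rows, $V_2$ with $N_0$ rows) is any matrix whose columns span $\mathcal K_n(\mathcal M,\mathcal R)$ (and $V_2^H G V_2$ is nonsingular); in case (b), $\mathcal V_n = \mathrm{diag}(S_n,\dots,S_n)$ ($l$ copies) with $S_n\in\mathbb{C}^{N\times n}$, $S_n^H S_n = I_n$, chosen so that $\mathcal K_n(\mathcal M,\mathcal R)\subseteq \mathrm{range}\,\mathcal V_n$. The projected pencil $s\mathcal E_n - \mathcal A_n$ is assumed regular and $s_0\mathcal E_n - \mathcal A_n$ nonsingular. *)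

From HB Require Import structures.
From mathcomp Require Import all_boot all_order all_algebra.
Set Implicit Arguments. Unset Strict Implicit. Unset Printing Implicit Defensive.
Import Order.TTheory GRing.Theory Num.Theory.
Local Open Scope ring_scope.

(* Complex scalars: an arbitrary numClosedFieldType C (e.g. the complex
   numbers); Num.conj is complex conjugation, `|x| the modulus. *)

Definition hadj (C : numClosedFieldType) m n (A : 'M[C]_(m, n)) : 'M[C]_(n, m) :=
  (map_mx Num.conj A)^T.

Definition is_hermitian (C : numClosedFieldType) n (A : 'M[C]_n) : Prop :=
  hadj A = A.

Definition transfer (C : numClosedFieldType) p q K
  (D : 'M[C]_(p, q)) (L : 'M[C]_(p, K)) (E A : 'M[C]_K) (B : 'M[C]_(K, q))
  (s : C) : 'M[C]_(p, q) :=
  D + L *m invmx (s *: E - A) *m B.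

Definition krylovM (C : numClosedFieldType) K (E A : 'M[C]_K) (s0 : C) : 'M[C]_K :=
  invmx (s0 *: E - A) *m E.
Definition krylovR (C : numClosedFieldType) K q (E A : 'M[C]_K) (B : 'M[C]_(K, q))
  (s0 : C) : 'M[C]_(K, q) :=
  invmx (s0 *: E - A) *m B.

Section Deflation.
Variables (C : numClosedFieldType) (K q : nat) (M : 'M[C]_K) (R : 'M[C]_(K, q)).

(* column i of the k-th block M^k R of the block-Krylov matrix, as a row vector
   (mxalgebra works with row spaces) *)
Definition kcol (k : nat) (i : 'I_q) : 'rV[C]_K := (col i (M ^+ k *m R))^T.

(* span of all columns preceding column (k,i) in [R, MR, M^2 R, ...]; it equals
   the span of the preceding columns that survive the deflation *)
Definition kearlier (k : nat) (i : 'I_q) : 'M[C]_K :=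
  ((\sum_(0 <= k' < k) <<(M ^+ k' *m R)^T>>) +
   (\sum_(i' < q | (i' < i)%N) <<kcol k i'>>))%MS.

(* column (k,i) is kept by the deflation iff it is linearly independent of the
   earlier columns *)
Definition kept (k : nat) (i : 'I_q) : bool := ~~ (kcol k i <= kearlier k i)%MS.

(* m_{k+1} = number of columns of the deflated block R^{(k+1)} *)
Definition mblk (k : nat) : nat := #|[pred i : 'I_q | kept k i]|.

(* j_max = index of the last nonempty block of the deflated block-Krylov matrix
   (all nonempty blocks have index <= K, the state dimension) *)
Definition jmax : nat := \max_(k < K | (0 < mblk k)%N) k.+1.

Definition nblk (j : nat) : nat := \sum_(0 <= k < j) mblk k.

(* K_{n(j)}(M,R) = range [R^{(1)}, M R^{(2)}, ..., M^{j-1} R^{(j)}]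
   (as a row space of row vectors) *)
Definition krylov (j : nat) : 'M[C]_K :=
  (\sum_(0 <= k < j) \sum_(i < q | kept k i) <<kcol k i>>)%MS.

End Deflation.

Definition padeO (C : numClosedFieldType) p q K Kn
  (D : 'M[C]_(p, q)) (L : 'M[C]_(p, K)) (E A : 'M[C]_K) (B : 'M[C]_(K, q))
  (Ln : 'M[C]_(p, Kn)) (En An : 'M[C]_Kn) (Bn : 'M[C]_(Kn, q))
  (s0 : C) (e : nat) : Prop :=
  exists (delta c : C), 0 < delta /\
    forall s : C, `|s - s0| < delta ->
      s *: E - A \in unitmx -> s *: En - An \in unitmx ->
      forall (a : 'I_p) (b : 'I_q),
        `|(transfer D Ln En An Bn s - transfer D L E A B s) a b|
          <= c * `|s - s0| ^+ e.

(* first = true : P_{-1} = F G F^H ; first = false : P_{-1} = F G^{-1} F^H *)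
Definition sso_A (C : numClosedFieldType) N N0 (first : bool)
  (P0 : 'M[C]_N) (F : 'M[C]_(N, N0)) (G : 'M[C]_N0) : 'M[C]_(N + N0) :=
  if first then block_mx (- P0) (- (F *m G)) (hadj (F *m G)) 0
  else block_mx (- P0) (- F) (hadj F) 0.

Definition sso_E (C : numClosedFieldType) N N0 (first : bool)
  (P1 : 'M[C]_N) (G : 'M[C]_N0) : 'M[C]_(N + N0) :=
  if first then block_mx P1 0 0 (hadj G) else block_mx P1 0 0 G.

Definition ho_E (C : numClosedFieldType) N l (P : nat -> 'M[C]_N) :=
  \mxdiag_(i < l) (if (i == l.-1 :> nat) then P l else 1%:M).

Definition ho_A (C : numClosedFieldType) N l (P : nat -> 'M[C]_N) :=
  - \mxblock_(i < l, j < l)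
      (if (i == l.-1 :> nat) then P j
       else if (j == i.+1 :> nat) then - 1%:M else (0 : 'M[C]_N)).

Definition ho_B (C : numClosedFieldType) N q l (B : 'M[C]_(N, q)) :=
  \mxcol_(i < l) (if (i == l.-1 :> nat) then B else 0).

Definition ho_L (C : numClosedFieldType) N q l (B : 'M[C]_(N, q)) :=
  \mxrow_(j < l) (if (j == 0 :> nat) then hadj B else 0).

(* Write K(s) = sE - A, X(s) = K(s)^-1 B and Q(s) = V (V^H K(s) V)^-1 V^H, so that
   H_n(s) - H(s) = L (Q K - 1) X. Expanding X(s) around s0 in powers of (s0 - s), the
   first j terms are the Krylov blocks M^i R, which lie in range V; hence
   X = V w + (s0 - s)^j Z(s) with Z bounded near s0, and since Q K - 1 kills range V,
   the right factor (Q K - 1) X is O((s - s0)^j). Hermitian structure rewrites the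
   output map L through the resolvent at the conjugate point: L = X(conj s)^H J K(s)
   with J = diag(1, -1) in case (a), and B^H = X_0(conj s)^H P(s) on the first block
   of the companion form in case (b). As s0 is real, X(conj s) has the same Krylov
   expansion, so the left factor is V (...)^H + O((s - s0)^j); its V-part is killed
   by the Galerkin condition V^H K (Q K - 1) = 0, and the two O((s - s0)^j) factors
   multiply to the order 2j. *)

From HB Require Import structures.
From mathcomp Require Import all_boot all_order all_algebra.
Set Implicit Arguments. Unset Strict Implicit. Unset Printing Implicit Defensive.
Import Order.TTheory GRing.Theory Num.Theory.
Local Open Scope ring_scope.

Section LocalBounds.
Variable C : numClosedFieldType.
Implicit Types (s d e r : C) (p : {poly C}).

Definition nearby (s0 : C) (P : C -> Prop) : Prop :=
  exists2 d, 0 < d & forall s, `|s - s0| < d -> P s.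

Lemma nearby_ball (s0 : C) d : 0 < d -> nearby s0 (fun s => `|s - s0| < d).
Proof. by move=> d_gt0; exists d. Qed.

Lemma nearbyW (s0 : C) (P Q : C -> Prop) :
  (forall s, P s -> Q s) -> nearby s0 P -> nearby s0 Q.
Proof. by move=> PQ [d d_gt0 hP]; exists d => // s /hP /PQ. Qed.

Lemma nearby_and (s0 : C) (P Q : C -> Prop) :
  nearby s0 P -> nearby s0 Q -> nearby s0 (fun s => P s /\ Q s).
Proof.
move=> [d1 d1_gt0 hP] [d2 d2_gt0 hQ]; have d12_gt0 : 0 < d1 + d2 by rewrite addr_gt0.
exists (d1 * d2 / (d1 + d2)) => [|s hs]; first by rewrite divr_gt0 ?mulr_gt0.
split; [apply: hP | apply: hQ]; apply: lt_le_trans hs _.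
  by rewrite ler_pdivrMr // ler_pM2l // lerDr ltW.
by rewrite ler_pdivrMr // mulrC ler_pM2l // lerDl ltW.
Qed.

Lemma nearby_conj (s0 : C) (P : C -> Prop) :
  s0 \is Num.real -> nearby s0 P -> nearby s0 (fun s => P (Num.conj s)).
Proof.
move=> s0_real [d d_gt0 hP]; exists d => // s hs; apply: hP.
by rewrite -(conj_Creal s0_real) -rmorphB norm_conjC.
Qed.

Definition bounded_near (s0 : C) m n (f : C -> 'M[C]_(m, n)) : Prop :=
  exists c, nearby s0 (fun s => forall a b, `|f s a b| <= c).

Lemma ler_entry_sum m n (F : 'I_m -> 'I_n -> C) a b :
  (forall a b, 0 <= F a b) -> F a b <= \sum_a' \sum_b' F a' b'.
Proof.
move=> F_ge0; rewrite (bigD1 a) //= (bigD1 b) //= -addrA lerDl addr_ge0 ?sumr_ge0 //.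
by move=> a' _; rewrite sumr_ge0.
Qed.

Lemma bounded_near_const (s0 : C) m n (A : 'M[C]_(m, n)) : bounded_near s0 (fun=> A).
Proof.
exists (\sum_a \sum_b `|A a b|); exists 1 => // s _ a b.
by apply: (ler_entry_sum (F := fun a b => `|A a b|)) => *.
Qed.

Lemma eq_bounded_near_nearby (s0 : C) m n (f g : C -> 'M[C]_(m, n)) :
  nearby s0 (fun s => f s = g s) -> bounded_near s0 f -> bounded_near s0 g.
Proof.
move=> fg [c hc]; exists c.
by apply: nearbyW (nearby_and fg hc) => s [<-].
Qed.

Lemma eq_bounded_near (s0 : C) m n (f g : C -> 'M[C]_(m, n)) :
  (forall s, f s = g s) -> bounded_near s0 f -> bounded_near s0 g.
Proof. by move=> fg; apply: eq_bounded_near_nearby; exists 1. Qed.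

Lemma bounded_nearD (s0 : C) m n (f g : C -> 'M[C]_(m, n)) :
  bounded_near s0 f -> bounded_near s0 g -> bounded_near s0 (fun s => f s + g s).
Proof.
move=> [c1 hf] [c2 hg]; exists (c1 + c2).
apply: nearbyW (nearby_and hf hg) => s [hfs hgs] a b.
by rewrite mxE (le_trans (ler_normD _ _)) // lerD.
Qed.

Lemma bounded_nearN (s0 : C) m n (f : C -> 'M[C]_(m, n)) :
  bounded_near s0 f -> bounded_near s0 (fun s => - f s).
Proof. by move=> [c hf]; exists c; apply: nearbyW hf => s hs a b; rewrite mxE normrN. Qed.

Lemma bounded_nearM (s0 : C) m n k (f : C -> 'M[C]_(m, n)) (g : C -> 'M[C]_(n, k)) :
  bounded_near s0 f -> bounded_near s0 g -> bounded_near s0 (fun s => f s *m g s).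
Proof.
move=> [c1 hf] [c2 hg]; exists (\sum_(i < n) c1 * c2).
apply: nearbyW (nearby_and hf hg) => s [hfs hgs] a b.
rewrite mxE (le_trans (ler_norm_sum _ _ _)) // ler_sum // => i _.
by rewrite normrM ler_pM.
Qed.

Lemma bounded_nearZ (s0 : C) m n (a : C -> C) (c : C) (f : C -> 'M[C]_(m, n)) :
  nearby s0 (fun s => `|a s| <= c) -> bounded_near s0 f ->
  bounded_near s0 (fun s => a s *: f s).
Proof.
move=> ha [c' hf]; exists (c * c').
apply: nearbyW (nearby_and ha hf) => s [has hfs] i j.
by rewrite mxE normrM ler_pM.
Qed.

Lemma bounded_near_hadj_conj (s0 : C) m n (f : C -> 'M[C]_(m, n)) :
  s0 \is Num.real -> bounded_near s0 f ->
  bounded_near s0 (fun s => hadj (f (Num.conj s))).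
Proof.
move=> s0_real [c hf]; exists c.
by apply: nearbyW (nearby_conj s0_real hf) => s hs a b; rewrite !mxE norm_conjC.
Qed.

Definition horner_bound p (r : C) : C := \sum_(i < size p) `|p`_i| * r ^+ i.

Lemma horner_bound_ge0 p r : 0 <= r -> 0 <= horner_bound p r.
Proof. by move=> r_ge0; rewrite sumr_ge0 // => i _; rewrite mulr_ge0 ?exprn_ge0. Qed.

Lemma norm_horner_le p s r : `|s| <= r -> `|p.[s]| <= horner_bound p r.
Proof.
move=> sr; rewrite horner_coef (le_trans (ler_norm_sum _ _ _)) // ler_sum // => i _.
by rewrite normrM normrX ler_wpM2l // lerXn2r // nnegrE // (le_trans _ sr).
Qed.

Lemma nearby_norm_le (s0 : C) : nearby s0 (fun s => `|s| <= `|s0| + 1).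
Proof.
apply: nearbyW (nearby_ball s0 ltr01) => s /ltW hs.
by rewrite -(subrK s0 s) (le_trans (ler_normD _ _)) // addrC lerD2l.
Qed.

Lemma nearby_horner_lt (s0 : C) p e :
  0 < e -> nearby s0 (fun s => `|p.[s] - p.[s0]| < e).
Proof.
move=> e_gt0; have /factor_theorem [q pq] : root (p - p.[s0]%:P) s0.
  by rewrite /root !hornerE subrr.
set c := horner_bound q (`|s0| + 1).
have c_ge0 : 0 <= c by rewrite horner_bound_ge0 // addr_ge0.
have c1_gt0 : 0 < c + 1 by rewrite ltr_wpDl.
apply: nearbyW (nearby_and (nearby_norm_le s0) (nearby_ball s0 (divr_gt0 e_gt0 c1_gt0))).
move=> s [/(norm_horner_le q) hq hs].
have -> : p.[s] - p.[s0] = q.[s] * (s - s0).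
  by have := congr1 (horner^~ s) pq; rewrite !hornerE.
rewrite normrM (le_lt_trans (ler_wpM2r _ hq)) //.
rewrite (le_lt_trans (ler_wpM2l c_ge0 (ltW hs))) // mulrA ltr_pdivrMr //.
by rewrite mulrC ltr_pM2l // ltrDl.
Qed.

Definition mxeval m n (PM : 'M[{poly C}]_(m, n)) s : 'M[C]_(m, n) :=
  map_mx (horner_eval s) PM.

Lemma bounded_near_mxeval (s0 : C) m n (PM : 'M[{poly C}]_(m, n)) :
  bounded_near s0 (mxeval PM).
Proof.
exists (\sum_a \sum_b horner_bound (PM a b) (`|s0| + 1)).
apply: nearbyW (nearby_norm_le s0) => s hs a b; rewrite mxE.
apply: le_trans (norm_horner_le _ hs) _.
apply: (ler_entry_sum (F := fun a b => horner_bound (PM a b) _)) => a' b'.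
by rewrite horner_bound_ge0 // addr_ge0.
Qed.

Lemma nearby_det_mxeval (s0 : C) n (PM : 'M[{poly C}]_n) :
  mxeval PM s0 \in unitmx ->
  nearby s0 (fun s => `|\det (mxeval PM s0)| / 2 < `|\det (mxeval PM s)|).
Proof.
rewrite unitmxE unitfE -normr_gt0 => d0_gt0.
have := nearby_horner_lt s0 (\det PM) (divr_gt0 d0_gt0 (ltr0Sn _ 1)).
apply: nearbyW => s; rewrite /mxeval !det_map_mx /= => hs.
have := le_lt_trans (ler_dist_dist _ _) hs; rewrite distrC.
move=> /(le_lt_trans (real_ler_norm (rpredB (normr_real _) (normr_real _)))).
by rewrite ltrBlDl -ltrBlDr {1}(splitr `|_|) addrK.
Qed.

Lemma nearby_unitmx_mxeval (s0 : C) n (PM : 'M[{poly C}]_n) :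
  mxeval PM s0 \in unitmx -> nearby s0 (fun s => mxeval PM s \in unitmx).
Proof.
move=> u0; apply: nearbyW (nearby_det_mxeval u0) => s /(le_lt_trans _) hs.
by rewrite unitmxE unitfE -normr_gt0 hs // divr_ge0.
Qed.

Lemma bounded_near_invmx_mxeval (s0 : C) n (PM : 'M[{poly C}]_n) :
  mxeval PM s0 \in unitmx -> bounded_near s0 (fun s => invmx (mxeval PM s)).
Proof.
move=> u0; have d0_gt0 : 0 < `|\det (mxeval PM s0)| / 2.
  by rewrite divr_gt0 // normr_gt0 -unitfE -unitmxE.
apply: (eq_bounded_near_nearby (f := fun s =>
  (\det (mxeval PM s))^-1 *: mxeval (\adj PM) s)).
  apply: nearbyW (nearby_unitmx_mxeval u0) => s us.
  by rewrite /invmx us /mxeval map_mx_adj.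
apply: (bounded_nearZ (c := (`|\det (mxeval PM s0)| / 2)^-1)) (bounded_near_mxeval _ _).
apply: nearbyW (nearby_det_mxeval u0) => s hs.
by rewrite normfV lef_pV2 ?posrE ?ltW // (lt_trans d0_gt0).
Qed.

Definition pencil_mx k (E A : 'M[C]_k) : 'M[{poly C}]_k :=
  \matrix_(a, b) ('X * (E a b)%:P - (A a b)%:P).

Lemma mxeval_pencil k (E A : 'M[C]_k) s : mxeval (pencil_mx E A) s = s *: E - A.
Proof. by apply/matrixP => a b; rewrite !mxE /horner_eval !hornerE. Qed.

Lemma bounded_near_pencil (s0 : C) k (E A : 'M[C]_k) :
  bounded_near s0 (fun s => s *: E - A).
Proof. exact: eq_bounded_near (mxeval_pencil E A) (bounded_near_mxeval _ _). Qed.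

Lemma nearby_unitmx_pencil (s0 : C) k (E A : 'M[C]_k) :
  s0 *: E - A \in unitmx -> nearby s0 (fun s => s *: E - A \in unitmx).
Proof.
rewrite -mxeval_pencil => /nearby_unitmx_mxeval.
by apply: nearbyW => s; rewrite mxeval_pencil.
Qed.

Lemma bounded_near_invmx_pencil (s0 : C) k (E A : 'M[C]_k) :
  s0 *: E - A \in unitmx -> bounded_near s0 (fun s => invmx (s *: E - A)).
Proof.
rewrite -mxeval_pencil => /bounded_near_invmx_mxeval.
by apply: eq_bounded_near => s; rewrite mxeval_pencil.
Qed.

Lemma padeO_of_bounded_near (m q k kn : nat) (D : 'M[C]_(m, q)) (L : 'M[C]_(m, k))
    (E A : 'M[C]_k) (B : 'M[C]_(k, q)) (Ln : 'M[C]_(m, kn)) (En An : 'M[C]_kn)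
    (Bn : 'M[C]_(kn, q)) (s0 : C) (e : nat) (F : C -> 'M[C]_(m, q)) :
  bounded_near s0 F ->
  nearby s0 (fun s => s *: E - A \in unitmx -> s *: En - An \in unitmx ->
    transfer D Ln En An Bn s - transfer D L E A B s = (s - s0) ^+ e *: F s) ->
  padeO D L E A B Ln En An Bn s0 e.
Proof.
move=> [c hF] herr; have [d d_gt0 hd] := nearby_and hF herr.
exists d, c; split => // s /hd[hFs hs] u un a b.
by rewrite hs // mxE normrM normrX mulrC ler_wpM2r ?exprn_ge0.
Qed.

End LocalBounds.

Section Adjoint.
Variable C : numClosedFieldType.

Lemma hadjM m n k (A : 'M[C]_(m, n)) (B : 'M[C]_(n, k)) :
  hadj (A *m B) = hadj B *m hadj A.
Proof. by rewrite /hadj map_mxM trmx_mul. Qed.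

Lemma hadjD m n (A B : 'M[C]_(m, n)) : hadj (A + B) = hadj A + hadj B.
Proof. by rewrite /hadj map_mxD linearD. Qed.

Lemma hadjN m n (A : 'M[C]_(m, n)) : hadj (- A) = - hadj A.
Proof. by rewrite /hadj map_mxN linearN. Qed.

Lemma hadjZ m n a (A : 'M[C]_(m, n)) : hadj (a *: A) = Num.conj a *: hadj A.
Proof. by apply/matrixP => i j; rewrite !mxE rmorphM. Qed.

Lemma hadjK m n (A : 'M[C]_(m, n)) : hadj (hadj A) = A.
Proof. by apply/matrixP => i j; rewrite !mxE conjCK. Qed.

Lemma hadj0 m n : hadj (0 : 'M[C]_(m, n)) = 0.
Proof. by apply/matrixP => i j; rewrite !mxE rmorph0. Qed.

Lemma hadj1 n : hadj (1%:M : 'M[C]_n) = 1%:M.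
Proof. by apply/matrixP => i j; rewrite !mxE eq_sym rmorphMn rmorph1. Qed.

Lemma hadj_block_mx m1 m2 n1 n2 (A1 : 'M[C]_(m1, n1)) (A2 : 'M[C]_(m1, n2))
    (A3 : 'M[C]_(m2, n1)) (A4 : 'M[C]_(m2, n2)) :
  hadj (block_mx A1 A2 A3 A4) = block_mx (hadj A1) (hadj A3) (hadj A2) (hadj A4).
Proof. by rewrite /hadj map_block_mx tr_block_mx. Qed.

Lemma hadj_col_mx m1 m2 n (A1 : 'M[C]_(m1, n)) (A2 : 'M[C]_(m2, n)) :
  hadj (col_mx A1 A2) = row_mx (hadj A1) (hadj A2).
Proof. by rewrite /hadj map_col_mx tr_col_mx. Qed.

Lemma hadj_sum m n k (F : 'I_k -> 'M[C]_(m, n)) :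
  hadj (\sum_(i < k) F i) = \sum_(i < k) hadj (F i).
Proof. by rewrite /hadj map_mx_sum linear_sum. Qed.

End Adjoint.

Lemma mulmx_split_sq (R : comNzRingType) m k k' n (y : 'M[R]_(m, k))
    (u : 'M[R]_(m, k')) (U : 'M[R]_(k', k)) (Y : 'M[R]_(m, k)) (x Z : 'M[R]_(k, n)) a :
  y = u *m U + a *: Y -> U *m x = 0 -> x = a *: Z -> y *m x = a ^+ 2 *: (Y *m Z).
Proof.
move=> -> Ux0 xZ; rewrite mulmxDl -mulmxA Ux0 mulmx0 add0r xZ.
by rewrite -scalemxAl -scalemxAr scalerA.
Qed.

Section Krylov.
Variables (C : numClosedFieldType) (K q : nat) (M : 'M[C]_K) (R : 'M[C]_(K, q)).

Lemma krylov_mono j1 j2 : (j1 <= j2)%N -> (krylov M R j1 <= krylov M R j2)%MS.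
Proof. by move=> j12; rewrite /krylov (big_cat_nat (leq0n j1) j12) /= addsmxSl. Qed.

Lemma kcol_sub_krylov k i : (kcol M R k i <= krylov M R k.+1)%MS.
Proof.
elim/ltn_ind: k i => k IHk.
have blocks_sub k' : (k' < k)%N -> ((M ^+ k' *m R)^T <= krylov M R k.+1)%MS.
  move=> lt_k'k; apply/row_subP => i; rewrite -tr_col.
  have sub_k' : (krylov M R k'.+1 <= krylov M R k.+1)%MS by rewrite krylov_mono // leqW.
  exact: submx_trans (IHk k' lt_k'k i) sub_k'.
move=> i; have [n] := ubnP i; elim: n => // n IHn in i *; rewrite ltnS => le_in.
have [kept_i | /negPn earlier_i] := boolP (kept M R k i).
  rewrite /krylov big_nat_recr //= (submx_trans _ (addsmxSr _ _)) //.
  by rewrite (sumsmx_sup i) // genmxE.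
apply: submx_trans earlier_i _; rewrite addsmx_sub; apply/andP; split.
  rewrite big_mkord; apply/sumsmx_subP => k' _.
  by rewrite genmxE blocks_sub.
apply/sumsmx_subP => i' lt_i'i; rewrite genmxE IHn //.
exact: leq_trans lt_i'i le_in.
Qed.

Lemma krylov_block_sub k j : (k < j)%N -> ((M ^+ k *m R)^T <= krylov M R j)%MS.
Proof.
move=> lt_kj; apply/row_subP => i; rewrite -tr_col.
exact: submx_trans (kcol_sub_krylov k i) (krylov_mono lt_kj).
Qed.

End Krylov.

Section Resolvent.
Variables (C : numClosedFieldType) (k q : nat) (E A : 'M[C]_k) (B : 'M[C]_(k, q)).
Variable s0 : C.
Hypothesis T_unit : s0 *: E - A \in unitmx.

Let M := krylovM E A s0.
Let R := krylovR E A B s0.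

Definition krylov_rem j s : 'M[C]_(k, q) :=
  invmx (s *: E - A) *m (s0 *: E - A) *m (M ^+ j *m R).

Lemma resolvent_expansion s j : s *: E - A \in unitmx ->
  invmx (s *: E - A) *m B =
  \sum_(i < j) (s0 - s) ^+ i *: (M ^+ i *m R) + (s0 - s) ^+ j *: krylov_rem j s.
Proof.
move=> K_unit; elim: j => [|j IHj].
  by rewrite big_ord0 add0r scale1r /krylov_rem expr0 -idmxE mul1mx -mulmxA mulKVmx.
rewrite IHj big_ord_recr /= -addrA; congr (_ + _).
have KE : invmx (s *: E - A) *m E = invmx (s *: E - A) *m (s0 *: E - A) *m M.
  by rewrite /M /krylovM mulmxA mulmxK.
have T_split : s0 *: E - A = (s *: E - A) + (s0 - s) *: E.
  by rewrite scalerBl [RHS]addrC -addrA addKr.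
have -> : krylov_rem j s = M ^+ j *m R + (s0 - s) *: krylov_rem j.+1 s.
  rewrite {1}/krylov_rem {1}T_split mulmxDr mulVmx // mulmxDl mul1mx.
  by rewrite -scalemxAr -scalemxAl KE /krylov_rem exprS -!mulmxA.
by rewrite scalerDr scalerA -exprSr.
Qed.

Lemma bounded_near_krylov_rem j : bounded_near s0 (krylov_rem j).
Proof.
apply: bounded_nearM (bounded_near_const _ _).
exact: bounded_nearM (bounded_near_invmx_pencil T_unit) (bounded_near_const _ _).
Qed.

Lemma resolvent_split n (V : 'M[C]_(k, n)) j s :
  (forall i, (i < j)%N -> ((M ^+ i *m R)^T <= V^T)%MS) -> s *: E - A \in unitmx ->
  exists w, invmx (s *: E - A) *m B = V *m w + (s0 - s) ^+ j *: krylov_rem j s.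
Proof.
move=> blocks_sub K_unit; rewrite (resolvent_expansion j) //.
set S := \sum_(i < j) _.
have /submxP[w Sw] : (S^T <= V^T)%MS.
  by rewrite linear_sum summx_sub // => i _; rewrite linearZ scalemx_sub ?blocks_sub.
by exists w^T; rewrite -[S]trmxK Sw trmx_mul trmxK.
Qed.

End Resolvent.

Section Galerkin.
Variables (C : numClosedFieldType) (k m : nat) (V : 'M[C]_(k, m)).

Definition galerkin (K : 'M[C]_k) : 'M[C]_k := V *m invmx (hadj V *m K *m V) *m hadj V.

Lemma galerkin_residual_mulV K : hadj V *m K *m V \in unitmx ->
  (galerkin K *m K - 1%:M) *m V = 0.
Proof.
move=> Kn_unit; rewrite mulmxBl mul1mx /galerkin -!mulmxA [hadj V *m _]mulmxA.
by rewrite mulVmx // mulmx1 subrr.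
Qed.

Lemma hadj_mul_galerkin_residual K : hadj V *m K *m V \in unitmx ->
  hadj V *m K *m (galerkin K *m K - 1%:M) = 0.
Proof.
move=> Kn_unit; rewrite mulmxBr mulmx1 /galerkin !mulmxA mulmxV // mul1mx.
by rewrite subrr.
Qed.

Lemma galerkin_residual_split K q (w : 'M[C]_(m, q)) a (Z : 'M[C]_(k, q)) :
  hadj V *m K *m V \in unitmx ->
  (galerkin K *m K - 1%:M) *m (V *m w + a *: Z) = a *: ((galerkin K *m K - 1%:M) *m Z).
Proof.
by move=> Kn_unit; rewrite mulmxDr -scalemxAr mulmxA galerkin_residual_mulV // mul0mx add0r.
Qed.

Lemma pencil_hadj_proj (E A : 'M[C]_k) s :
  s *: (hadj V *m E *m V) - hadj V *m A *m V = hadj V *m (s *: E - A) *m V.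
Proof. by rewrite mulmxBr mulmxBl -scalemxAr -scalemxAl. Qed.

Lemma transfer_proj_sub p q (D : 'M[C]_(p, q)) (L : 'M[C]_(p, k)) (E A : 'M[C]_k)
    (B : 'M[C]_(k, q)) s :
  let K := s *: E - A in
  K \in unitmx -> hadj V *m K *m V \in unitmx ->
  transfer D (L *m V) (hadj V *m E *m V) (hadj V *m A *m V) (hadj V *m B) s
    - transfer D L E A B s = L *m ((galerkin K *m K - 1%:M) *m (invmx K *m B)).
Proof.
move=> K K_unit Kn_unit; rewrite /transfer pencil_hadj_proj opprD addrACA subrr add0r.
by rewrite mulmxBl mul1mx -!mulmxA mulKVmx // mulmxBr !mulmxA.
Qed.

Lemma bounded_near_galerkin (E A : 'M[C]_k) (s0 : C) :
  s0 *: (hadj V *m E *m V) - hadj V *m A *m V \in unitmx ->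
  bounded_near s0 (fun s => galerkin (s *: E - A)).
Proof.
move=> /bounded_near_invmx_pencil bnd_inv.
apply: (eq_bounded_near (f := fun s =>
  V *m invmx (s *: (hadj V *m E *m V) - hadj V *m A *m V) *m hadj V)).
  by move=> s; rewrite pencil_hadj_proj.
exact: bounded_nearM (bounded_nearM (bounded_near_const _ _) bnd_inv) (bounded_near_const _ _).
Qed.

Lemma bounded_near_galerkin_residual (E A : 'M[C]_k) (s0 : C) :
  s0 *: (hadj V *m E *m V) - hadj V *m A *m V \in unitmx ->
  bounded_near s0 (fun s => galerkin (s *: E - A) *m (s *: E - A) - 1%:M).
Proof.
move=> Tn_unit; apply: bounded_nearD (bounded_nearN (bounded_near_const _ _)).
exact: bounded_nearM (bounded_near_galerkin Tn_unit) (bounded_near_pencil _ _ _).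
Qed.

End Galerkin.

Lemma conj_sub_conj (C : numClosedFieldType) (s0 s : C) :
  s0 \is Num.real -> Num.conj (s0 - Num.conj s) = s0 - s.
Proof. by move=> s0_real; rewrite rmorphB /= conjCK conj_Creal. Qed.

Lemma sqr_exprB (R : comNzRingType) (x y : R) j :
  ((x - y) ^+ j) ^+ 2 = (y - x) ^+ (2 * j).
Proof. by rewrite -exprM mulnC !exprM -sqrrN opprB. Qed.

Section JSymmetric.
Variables (C : numClosedFieldType) (k m q : nat).
Variables (E A J : 'M[C]_k) (B : 'M[C]_(k, q)) (L : 'M[C]_(q, k)) (D : 'M[C]_q).
Variables (V : 'M[C]_(k, m)) (Jn : 'M[C]_m) (s0 : C) (j : nat).
Hypothesis s0_real : s0 \is Num.real.
Hypothesis T_unit : s0 *: E - A \in unitmx.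
Hypothesis Tn_unit : s0 *: (hadj V *m E *m V) - hadj V *m A *m V \in unitmx.
Hypothesis J_sym : forall s, J *m (s *: E - A) = hadj (Num.conj s *: E - A) *m J.
Hypothesis J_herm : hadj J = J.
Hypothesis BJ : hadj B *m J = L.
Hypothesis JV : J *m V = V *m Jn.
Hypothesis blocks_sub : forall i, (i < j)%N ->
  ((krylovM E A s0 ^+ i *m krylovR E A B s0)^T <= V^T)%MS.

Lemma padeO_J_symmetric :
  padeO D L E A B (L *m V) (hadj V *m E *m V) (hadj V *m A *m V) (hadj V *m B) s0 (2 * j).
Proof.
pose Z := krylov_rem E A B s0 j.
pose G s := (s *: E - A) *m (galerkin V (s *: E - A) *m (s *: E - A) - 1%:M).
apply: (padeO_of_bounded_near (F := fun s => hadj (Z (Num.conj s)) *m J *m G s *m Z s)).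
  have bnd_G : bounded_near s0 G.
    exact: bounded_nearM (bounded_near_pencil _ _ _) (bounded_near_galerkin_residual Tn_unit).
  have bnd_Z : bounded_near s0 Z := bounded_near_krylov_rem B T_unit j.
  apply: (bounded_nearM _ bnd_Z); apply: (bounded_nearM _ bnd_G).
  exact: bounded_nearM (bounded_near_hadj_conj s0_real bnd_Z) (bounded_near_const _ _).
apply: nearbyW (nearby_conj s0_real (nearby_unitmx_pencil T_unit)) => s Kb_unit K_unit.
rewrite pencil_hadj_proj => Kn_unit.
set K := s *: E - A; set Kb := Num.conj s *: E - A.
rewrite transfer_proj_sub //.
set x := (galerkin V K *m K - 1%:M) *m (invmx K *m B).
have [w Xw] := resolvent_split T_unit blocks_sub K_unit.
have [wb Xbw] := resolvent_split T_unit blocks_sub Kb_unit.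
have L_eq : L = hadj (invmx Kb *m B) *m J *m K.
  by rewrite -mulmxA J_sym mulmxA -hadjM mulKVmx.
have y_split : hadj (invmx Kb *m B) *m J =
    hadj wb *m hadj Jn *m hadj V + (s0 - s) ^+ j *: (hadj (Z (Num.conj s)) *m J).
  rewrite Xbw hadjD mulmxDl hadjM -mulmxA -J_herm -hadjM JV hadjM mulmxA.
  by rewrite hadjZ rmorphXn /= conj_sub_conj // scalemxAl.
have Vx : hadj V *m (K *m x) = 0.
  by rewrite /x mulmxA mulmxA hadj_mul_galerkin_residual // mul0mx.
have x_split : K *m x = (s0 - s) ^+ j *: (G s *m Z s).
  by rewrite /x Xw galerkin_residual_split // -scalemxAr /G mulmxA.
by rewrite L_eq -mulmxA (mulmx_split_sq y_split Vx x_split) sqr_exprB !mulmxA.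
Qed.

End JSymmetric.

Section SecondOrder.
Variable C : numClosedFieldType.

Definition sign_mx m1 m2 : 'M[C]_(m1 + m2) := block_mx 1%:M 0 0 (- 1%:M).

Lemma hadj_sign_mx m1 m2 : hadj (sign_mx m1 m2) = sign_mx m1 m2.
Proof. by rewrite hadj_block_mx !hadj0 hadjN !hadj1. Qed.

Lemma sign_mx_block_diag m1 m2 n1 n2 (X : 'M[C]_(m1, n1)) (Y : 'M[C]_(m2, n2)) :
  sign_mx m1 m2 *m block_mx X 0 0 Y = block_mx X 0 0 Y *m sign_mx n1 n2.
Proof.
rewrite !mulmx_block !mulmx0 !mul0mx !mulmxN !mulNmx !mulmx1 !mul1mx.
by rewrite !addr0 !add0r.
Qed.

Lemma sign_mx_saddle_pencil N N0 (P0 P1 : 'M[C]_N) (X : 'M[C]_(N, N0)) (G : 'M[C]_N0) s :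
  is_hermitian P0 -> is_hermitian P1 -> is_hermitian G ->
  sign_mx N N0 *m (s *: block_mx P1 0 0 G - block_mx (- P0) (- X) (hadj X) 0)
  = hadj (Num.conj s *: block_mx P1 0 0 G - block_mx (- P0) (- X) (hadj X) 0)
    *m sign_mx N N0.
Proof.
move=> P0h P1h Gh.
rewrite !scale_block_mx !opp_block_mx !add_block_mx hadj_block_mx !mulmx_block.
rewrite !hadjD !hadjN !hadjZ hadjK P0h P1h Gh !hadj0 !conjCK.
rewrite !mul1mx !mul0mx !mulmx1 !mulmx0 !mulNmx !mulmxN !mul1mx !mulmx1.
by rewrite !scaler0 !oppr0 !addr0 !add0r !opprK.
Qed.

Lemma padeO_second_order N N0 q (first : bool) (P0 P1 : 'M[C]_N) (F : 'M[C]_(N, N0))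
    (G : 'M[C]_N0) (B : 'M[C]_(N, q)) (D : 'M[C]_q) (s0 : C) j n
    (V : 'M[C]_(N + N0, n)) :
  is_hermitian P0 -> is_hermitian P1 -> is_hermitian G ->
  let E := sso_E first P1 G in
  let A := sso_A first P0 F G in
  let Bc : 'M[C]_(N + N0, q) := col_mx B 0 in
  let Lc : 'M[C]_(q, N + N0) := row_mx (hadj B) 0 in
  s0 \is Num.real -> s0 *: E - A \in unitmx ->
  (krylov (krylovM E A s0) (krylovR E A Bc s0) j <= V^T)%MS ->
  let Vn : 'M[C]_(N + N0, n + n) := block_mx (usubmx V) 0 0 (dsubmx V) in
  let En := hadj Vn *m E *m Vn in
  let An := hadj Vn *m A *m Vn in
  s0 *: En - An \in unitmx ->
  padeO D Lc E A Bc (Lc *m Vn) En An (hadj Vn *m Bc) s0 (2 * j).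
Proof.
move=> P0h P1h Gh E A Bc Lc s0_real T_unit krylov_sub Vn En An Tn_unit.
apply: (padeO_J_symmetric (J := sign_mx N N0) D (Jn := sign_mx n n)) => //.
- move=> s; rewrite /E /A /sso_E /sso_A; case: ifP => _;
    by apply: sign_mx_saddle_pencil => //; rewrite /is_hermitian hadjK.
- exact: hadj_sign_mx.
- by rewrite /Bc /Lc hadj_col_mx hadj0 mul_row_block mulmx1 !mulmx0 !mul0mx !addr0.
- exact: sign_mx_block_diag.
move=> i lt_ij; apply: submx_trans (krylov_block_sub _ _ lt_ij) _.
apply: submx_trans krylov_sub _.
have -> : V = Vn *m col_mx 1%:M 1%:M.
  by rewrite /Vn mul_block_col !mulmx1 addr0 add0r vsubmxK.
by rewrite trmx_mul submxMl.
Qed.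

End SecondOrder.

Lemma submxcolZ (R : pzRingType) p (p_ : 'I_p -> nat) n a (W : 'M[R]_(\sum_i p_ i, n)) i :
  submxcol (a *: W) i = a *: submxcol W i.
Proof. by apply/matrixP => x y; rewrite !mxE. Qed.

Lemma bounded_near_submxcol (C : numClosedFieldType) (s0 : C) p (p_ : 'I_p -> nat) n
    (f : C -> 'M[C]_(\sum_i p_ i, n)) i :
  bounded_near s0 f -> bounded_near s0 (fun s => submxcol (f s) i).
Proof. by move=> [c hf]; exists c; apply: nearbyW hf => s hs a b; rewrite mxE. Qed.

Section Companion.
Variables (C : numClosedFieldType) (N l : nat).
Hypothesis l_gt0 : (0 < l)%N.

Definition first_blk : 'I_l := Ordinal l_gt0.
Definition last_blk : 'I_l := Ordinal (eq_leq (prednK l_gt0)).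

Definition matpoly (P : nat -> 'M[C]_N) s : 'M[C]_N := \sum_(i < l.+1) s ^+ i *: P i.

Lemma hadj_matpoly (P : nat -> 'M[C]_N) s :
  (forall i, (i <= l)%N -> is_hermitian (P i)) ->
  hadj (matpoly P (Num.conj s)) = matpoly P s.
Proof.
move=> P_herm; rewrite /matpoly hadj_sum; apply: eq_bigr => i _.
by rewrite hadjZ rmorphXn /= conjCK P_herm // -ltnS.
Qed.

Lemma bounded_near_matpoly (P : nat -> 'M[C]_N) (s0 : C) :
  bounded_near s0 (matpoly P).
Proof.
apply: (eq_bounded_near (f := mxeval (\matrix_(a, b) \poly_(i < l.+1) P i a b))).
  move=> s; apply/matrixP => a b; rewrite /matpoly !mxE /horner_eval horner_poly summxE.
  by apply: eq_bigr => i _; rewrite mxE mulrC.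
exact: bounded_near_mxeval.
Qed.

Lemma succ_ord_neq_last (i k : 'I_l) : k = i.+1 :> nat -> (i == l.-1 :> nat) = false.
Proof.
by move=> ki; apply/negbTE/eqP => il; move: (ltn_ord k); rewrite ki il prednK // ltnn.
Qed.

Section CompanionPencil.
Variables (P : nat -> 'M[C]_N) (s : C).
Let K := s *: ho_E l P - ho_A l P.

Lemma submxcol_companion r (W : 'M[C]_(\sum_(i < l) N, r)) i :
  submxcol (K *m W) i =
  s *: ((if i == l.-1 :> nat then P l else 1%:M) *m submxcol W i) +
  \sum_(k < l) ((if i == l.-1 :> nat then P k
           else if k == i.+1 :> nat then - 1%:M else 0) *m submxcol W k).
Proof.
rewrite -[W in K *m W]submxcolK mulmxBl -scalemxAl mul_mxdiag_mxcol mulNmx.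
by rewrite mul_mxblock_mxrow submxcolB submxcolZ submxcolN opprK !mxcolK.
Qed.

Lemma submxcol_companion_mid r (W : 'M[C]_(\sum_(i < l) N, r)) (i k : 'I_l) :
  k = i.+1 :> nat -> submxcol (K *m W) i = s *: submxcol W i - submxcol W k.
Proof.
move=> ki; rewrite submxcol_companion (succ_ord_neq_last ki) mul1mx (bigD1 k) //=.
rewrite ki eqxx mulNmx mul1mx big1 ?addr0 // => k' k'k.
by rewrite -ki (inj_eq val_inj) (negbTE k'k) mul0mx.
Qed.

Lemma submxcol_companion_last r (W : 'M[C]_(\sum_(i < l) N, r)) :
  (forall i, submxcol W i = s ^+ i *: submxcol W first_blk) ->
  submxcol (K *m W) last_blk = matpoly P s *m submxcol W first_blk.
Proof.
move=> W_geom; rewrite submxcol_companion /= eqxx /matpoly big_ord_recr /= mulmxDl addrC.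
congr (_ + _); last by rewrite W_geom /= -scalemxAr scalerA -exprS prednK // scalemxAl.
by rewrite mulmx_suml; apply: eq_bigr => i _; rewrite W_geom -scalemxAr scalemxAl.
Qed.

End CompanionPencil.

Lemma submxcol_geometric p r (W : 'M[C]_(\sum_(i < l) p, r)) s :
  (forall i k : 'I_l, k = i.+1 :> nat -> submxcol W k = s *: submxcol W i) ->
  forall i, submxcol W i = s ^+ i *: submxcol W first_blk.
Proof.
move=> W_step [i lt_il]; elim: i lt_il => [|i IHi] lt_il.
  by rewrite scale1r; congr submxcol; apply: val_inj.
have lt_il' := ltnW lt_il.
by rewrite (W_step (Ordinal lt_il')) // IHi scalerA -exprS.
Qed.

Lemma companion_solve (P : nat -> 'M[C]_N) s q (B : 'M[C]_(N, q))
    (X : 'M[C]_(\sum_(i < l) N, q)) :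
  (s *: ho_E l P - ho_A l P) *m X = ho_B l B ->
  matpoly P s *m submxcol X first_blk = B.
Proof.
move=> KX; rewrite -submxcol_companion_last.
  by rewrite KX /ho_B mxcolK /= eqxx.
apply: submxcol_geometric => i k ki.
have := submxcol_companion_mid P s X ki.
rewrite KX /ho_B mxcolK (succ_ord_neq_last ki) => /esym/eqP.
by rewrite subr_eq0 => /eqP->.
Qed.

Definition blkdiag m n (S : 'M[C]_(m, n)) : 'M[C]_(\sum_(i < l) m, \sum_(i < l) n) :=
  \mxblock_(i < l, k < l) (if i == k then S else 0).

Lemma submxcol_blkdiag m n (S : 'M[C]_(m, n)) r (W : 'M[C]_(\sum_(i < l) n, r)) i :
  submxcol (blkdiag S *m W) i = S *m submxcol W i.
Proof.
rewrite -[W in blkdiag S *m W]submxcolK mul_mxblock_mxrow mxcolK.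
rewrite (bigD1 i) //= eqxx big1 ?addr0 // => k /negbTE.
by rewrite eq_sym => ->; rewrite mul0mx.
Qed.

Lemma hadj_blkdiag m n (S : 'M[C]_(m, n)) : hadj (blkdiag S) = blkdiag (hadj S).
Proof.
apply/matrixP => a b; rewrite /hadj /blkdiag !mxE eq_sym.
by case: eqP => _; rewrite ?mxE ?rmorph0.
Qed.

Lemma companion_proj_solve (P : nat -> 'M[C]_N) s q n (B : 'M[C]_(N, q))
    (S : 'M[C]_(N, n)) (Xn : 'M[C]_(\sum_(i < l) n, q)) :
  hadj S *m S = 1%:M ->
  hadj (blkdiag S) *m ((s *: ho_E l P - ho_A l P) *m (blkdiag S *m Xn)) =
    hadj (blkdiag S) *m ho_B l B ->
  hadj S *m matpoly P s *m S *m submxcol Xn first_blk = hadj S *m B.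
Proof.
move=> S_isom KXn.
have KXn_blk (i : 'I_l) :
    hadj S *m submxcol ((s *: ho_E l P - ho_A l P) *m (blkdiag S *m Xn)) i =
    hadj S *m (if i == l.-1 :> nat then B else 0).
  have := congr1 (fun W => submxcol W i) KXn.
  by rewrite /= hadj_blkdiag !submxcol_blkdiag /ho_B mxcolK.
have Xn_geom : forall i, submxcol Xn i = s ^+ i *: submxcol Xn first_blk.
  apply: submxcol_geometric => i k ki; have := KXn_blk i.
  rewrite (submxcol_companion_mid _ _ _ ki) (succ_ord_neq_last ki) mulmx0.
  rewrite !submxcol_blkdiag scalemxAr -mulmxBr mulmxA S_isom mul1mx => /eqP.
  by rewrite subr_eq0 => /eqP->.
have := KXn_blk last_blk; rewrite submxcol_companion_last /= ?eqxx ?submxcol_blkdiag //.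
  by rewrite !mulmxA.
by move=> i; rewrite !submxcol_blkdiag Xn_geom scalemxAr.
Qed.

Lemma ho_L_mul q (B : 'M[C]_(N, q)) r (W : 'M[C]_(\sum_(i < l) N, r)) :
  ho_L l B *m W = hadj B *m submxcol W first_blk.
Proof.
rewrite -[W in _ *m W]submxcolK /ho_L mul_mxrow_mxcol (bigD1 first_blk) //=.
rewrite big1 ?addr0 //.
by move=> k; rewrite -(inj_eq val_inj) /= => /negbTE->; rewrite mul0mx.
Qed.

Lemma companion_galerkin_orth (P : nat -> 'M[C]_N) s q n (B : 'M[C]_(N, q))
    (S : 'M[C]_(N, n)) :
  let K := s *: ho_E l P - ho_A l P in
  let Vn := blkdiag S in
  K \in unitmx -> hadj Vn *m K *m Vn \in unitmx -> hadj S *m S = 1%:M ->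
  hadj S *m (matpoly P s *m
    submxcol ((galerkin Vn K *m K - 1%:M) *m (invmx K *m ho_B l B)) first_blk) = 0.
Proof.
move=> K Vn K_unit Kn_unit S_isom.
set Xn := invmx (hadj Vn *m K *m Vn) *m (hadj Vn *m ho_B l B).
have X0 : matpoly P s *m submxcol (invmx K *m ho_B l B) first_blk = B.
  by apply: companion_solve; rewrite mulKVmx.
have Xn0 : hadj S *m matpoly P s *m S *m submxcol Xn first_blk = hadj S *m B.
  by apply: companion_proj_solve => //; rewrite /Xn !mulmxA mulmxV // mul1mx.
have -> : (galerkin Vn K *m K - 1%:M) *m (invmx K *m ho_B l B) =
    Vn *m Xn - invmx K *m ho_B l B.
  by rewrite mulmxBl mul1mx -mulmxA mulKVmx // /galerkin /Xn -!mulmxA.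
rewrite submxcolB submxcol_blkdiag !mulmxBr !mulmxA Xn0.
by rewrite -(mulmxA (hadj S)) X0 subrr.
Qed.

Lemma padeO_companion q (P : nat -> 'M[C]_N) (B : 'M[C]_(N, q)) (D : 'M[C]_q) (s0 : C)
    j n (S : 'M[C]_(N, n)) :
  (forall i, (i <= l)%N -> is_hermitian (P i)) ->
  let E := ho_E l P in
  let A := ho_A l P in
  let Bc := ho_B l B in
  let Lc := ho_L l B in
  s0 \is Num.real -> s0 *: E - A \in unitmx ->
  hadj S *m S = 1%:M ->
  let Vn := blkdiag S in
  (krylov (krylovM E A s0) (krylovR E A Bc s0) j <= Vn^T)%MS ->
  let En := hadj Vn *m E *m Vn in
  let An := hadj Vn *m A *m Vn in
  s0 *: En - An \in unitmx ->
  padeO D Lc E A Bc (Lc *m Vn) En An (hadj Vn *m Bc) s0 (2 * j).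
Proof.
move=> P_herm E A Bc Lc s0_real T_unit S_isom Vn krylov_sub En An Tn_unit.
have blocks_sub i : (i < j)%N ->
    ((krylovM E A s0 ^+ i *m krylovR E A Bc s0)^T <= Vn^T)%MS.
  by move=> lt_ij; apply: submx_trans (krylov_block_sub _ _ lt_ij) krylov_sub.
pose Z := krylov_rem E A Bc s0 j.
pose res s := galerkin Vn (s *: E - A) *m (s *: E - A) - 1%:M.
apply: (padeO_of_bounded_near (F := fun s => hadj (submxcol (Z (Num.conj s)) first_blk)
  *m (matpoly P s *m submxcol (res s *m Z s) first_blk))).
  have bnd_Z : bounded_near s0 Z := bounded_near_krylov_rem Bc T_unit j.
  apply: bounded_nearM.
    exact: bounded_near_hadj_conj s0_real (bounded_near_submxcol _ bnd_Z).
  apply: bounded_nearM (bounded_near_matpoly _ _) (bounded_near_submxcol _ _).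
  exact: bounded_nearM (bounded_near_galerkin_residual Tn_unit) bnd_Z.
apply: nearbyW (nearby_conj s0_real (nearby_unitmx_pencil T_unit)) => s Kb_unit K_unit.
rewrite pencil_hadj_proj => Kn_unit.
rewrite transfer_proj_sub //.
set K := s *: E - A; set Kb := Num.conj s *: E - A.
set x := (galerkin Vn K *m K - 1%:M) *m (invmx K *m Bc).
have [w Xw] := resolvent_split T_unit blocks_sub K_unit.
have [wb Xbw] := resolvent_split T_unit blocks_sub Kb_unit.
have B_eq : hadj B = hadj (submxcol (invmx Kb *m Bc) first_blk) *m matpoly P s.
  by rewrite -(hadj_matpoly _ P_herm) -hadjM (companion_solve (B := B)) // mulKVmx.
have y_split : hadj (submxcol (invmx Kb *m Bc) first_blk) =
    hadj (submxcol wb first_blk) *m hadj S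
    + (s0 - s) ^+ j *: hadj (submxcol (Z (Num.conj s)) first_blk).
  rewrite Xbw submxcolD submxcolZ submxcol_blkdiag hadjD hadjM hadjZ rmorphXn /=.
  by rewrite conj_sub_conj.
have Sx : hadj S *m (matpoly P s *m submxcol x first_blk) = 0.
  exact: companion_galerkin_orth.
have x_split : matpoly P s *m submxcol x first_blk =
    (s0 - s) ^+ j *: (matpoly P s *m submxcol (res s *m Z s) first_blk).
  by rewrite /x Xw galerkin_residual_split // submxcolZ scalemxAr.
by rewrite /Lc ho_L_mul B_eq -mulmxA (mulmx_split_sq y_split Sx x_split) sqr_exprB.
Qed.

End Companion.

Theorem theorem2 (C : numClosedFieldType) :
  (* case (a): Hermitian special second-order system *)
  (forall (N N0 q : nat) (first : bool)
     (P0 P1 : 'M[C]_N) (F : 'M[C]_(N, N0)) (G : 'M[C]_N0)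
     (B : 'M[C]_(N, q)) (D : 'M[C]_q) (s0 : C) (j n : nat)
     (V : 'M[C]_(N + N0, n)),
   is_hermitian P0 -> is_hermitian P1 -> is_hermitian G ->
   (~~ first -> G \in unitmx) ->
   let E := sso_E first P1 G in
   let A := sso_A first P0 F G in
   let Bc : 'M[C]_(N + N0, q) := col_mx B 0 in
   let Lc : 'M[C]_(q, N + N0) := row_mx (hadj B) 0 in
   s0 \is Num.real ->
   s0 *: E - A \in unitmx ->
   let M := krylovM E A s0 in
   let R := krylovR E A Bc s0 in
   (1 <= j <= jmax M R)%N ->
   n = nblk M R j ->
   (V^T == krylov M R j)%MS ->
   hadj (dsubmx V) *m G *m dsubmx V \in unitmx ->
   let Vn : 'M[C]_(N + N0, n + n) := block_mx (usubmx V) 0 0 (dsubmx V) in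
   let En := hadj Vn *m E *m Vn in
   let An := hadj Vn *m A *m Vn in
   s0 *: En - An \in unitmx ->
   padeO D Lc E A Bc (Lc *m Vn) En An (hadj Vn *m Bc) s0 (2 * j))
  /\
  (* case (b): Hermitian l-th order system in companion form *)
  (forall (N q l : nat) (P : nat -> 'M[C]_N)
     (B : 'M[C]_(N, q)) (D : 'M[C]_q) (s0 : C) (j n : nat)
     (S : 'M[C]_(N, n)),
   (0 < l)%N ->
   (forall i, (i <= l)%N -> is_hermitian (P i)) ->
   let E := ho_E l P in
   let A := ho_A l P in
   let Bc := ho_B l B in
   let Lc := ho_L l B in
   s0 \is Num.real ->
   s0 *: E - A \in unitmx ->
   let M := krylovM E A s0 in
   let R := krylovR E A Bc s0 in
   (1 <= j <= jmax M R)%N ->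
   n = nblk M R j ->
   hadj S *m S = 1%:M ->
   let Vn := \mxblock_(i < l, k < l) (if i == k then S else 0) in
   (krylov M R j <= Vn^T)%MS ->
   let En := hadj Vn *m E *m Vn in
   let An := hadj Vn *m A *m Vn in
   s0 *: En - An \in unitmx ->
   padeO D Lc E A Bc (Lc *m Vn) En An (hadj Vn *m Bc) s0 (2 * j)).
Proof.
(* Only the inclusion of the Krylov space in the range of V_n matters: the bounds on j,
   the value of n and the invertibility of G and of V_2^H G V_2 are not needed. *)
split.
- move=> N N0 q first P0 P1 F G B D s0 j n V P0h P1h Gh _ E A Bc Lc s0_real T_unit M R.
  move=> _ _ /andP[_ krylov_sub] _ Vn En An Tn_unit.
  exact: padeO_second_order.
- move=> N q l P B D s0 j n S l_gt0 P_herm E A Bc Lc s0_real T_unit M R _ _ S_isom Vn.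
  move=> krylov_sub En An Tn_unit.
  exact: padeO_companion.
Qed.
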